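(* In the two-period difference-in-differences setting with anticipation described in the context, suppose $\mu_g$ and $\tau_g$ have different signs. Let $t^*$ satisfy $\Phi(t^* )-\Phi(-t^*/2)=\alpha$, where $\Phi$ is the standard normal CDF, and consider testing $H_0:\mu_g=0$ at level $\alpha$ using the confidence set $CS^\mu_\alpha$ defined in the context. If the t-statistic from the difference-in-differences model without anticipation, $\tilde t=\sqrt{n}\,\hat m_g/\hat\sigma_u$, satisfies $|\tilde t|>t^*$, then for any $\pi$, $0\notin CS^\mu_\alpha$.
   Context: Two periods $t\in\{0,1\}$, i.i.d. units $i=1,\dots,n$, observed treatment $D_i\in\{0,1\}$, unobserved anticipation $A_i\in\{0,1\}$, observed outcomes $Y_{i0},Y_{i1}$, known function $g$. $\mu_g=\mathbb{E}[g(Y_{i1}(1))-g(Y_{i1}(0))\mid D_i=1]$ is the treatment effect on the treated and $\tau_g=\mathbb{E}[g(Y_{i0}(1,1))-g(Y_{i0}(0,1))\mid D_i=1,A_i=1]$ the anticipatory effect, where $Y_{i0}(a,1)$ is the period-0 potential outcome of a treated unit with anticipation status $a$. When $\mu_g$ and $\tau_g$ have different signs, the identified set for $\mu_g$ is the interval with endpoints $m_g/(1+\pi)$ and $m_g$, where $m_g=\mathbb{E}[g(Y_{i1})-g(Y_{i0})\mid D_i=1]-\mathbb{E}[g(Y_{i1})-g(Y_{i0})\mid D_i=0]$ and $\pi\in(0,1)$ bounds $\mathbb{P}[A_i=1\mid D_i=1]$. Let $\hat m_g=\frac1{n_1}\sum_i[g(Y_{i1})-g(Y_{i0})]D_i-\frac1{n_0}\sum_i[g(Y_{i1})-g(Y_{i0})](1-D_i)$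 with $n_1=\sum_iD_i$, $n_0=n-n_1$, let $\hat\pi$ be a consistent estimator of $\pi$, and set the bound estimators $\hat m_g$ and $\hat m_g/(1+\hat\pi)$, with estimated asymptotic standard deviations $\hat\sigma_u$ (for $\hat m_g$) and $\hat\sigma_l=\hat\sigma_u/(1+\hat\pi)$. Let $\hat\sigma=\max\{\hat\sigma_l,\hat\sigma_u\}$, $\hat\mu_{g,l}=\min\{\hat m_g,\hat m_g/(1+\hat\pi)\}$, $\hat\mu_{g,u}=\max\{\hat m_g,\hat m_g/(1+\hat\pi)\}$, let $C_n$ solve $\Phi(C_n+\sqrt n(\hat\mu_{g,u}-\hat\mu_{g,l})/\hat\sigma)-\Phi(-C_n)=\alpha$, and $CS^\mu_\alpha=[\hat\mu_{g,l}-C_n\hat\sigma/\sqrt n,\ \hat\mu_{g,u}+C_n\hat\sigma/\sqrt n]$. *)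

From HB Require Import structures.
From mathcomp Require Import all_boot all_order all_algebra.
From mathcomp Require Import all_classical all_reals all_analysis.
Set Implicit Arguments. Unset Strict Implicit. Unset Printing Implicit Defensive.
Import Order.TTheory GRing.Theory Num.Theory.
Local Open Scope classical_set_scope.
Local Open Scope ring_scope.

Definition Phi {R : realType} (x : R) : R :=
  fine (normal_prob 0 1 `]-oo, x]).

Section DiD.
Variables (R : realType) (n : nat).
Variables (D : 'I_n -> bool) (Y0 Y1 : 'I_n -> R) (g : R -> R).

Definition n1 : nat := #|[set i | D i]|.
Definition n0 : nat := (n - n1)%N.

Definition mhat : R :=
  (n1%:R)^-1 * (\sum_(i < n | D i) (g (Y1 i) - g (Y0 i)))
  - (n0%:R)^-1 * (\sum_(i < n | ~~ D i) (g (Y1 i) - g (Y0 i))).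

Variables (pihat sigma_u : R).

Definition sigma_l : R := sigma_u / (1 + pihat).
Definition sigma_hat : R := Num.max sigma_l sigma_u.
Definition mu_l_hat : R := Num.min mhat (mhat / (1 + pihat)).
Definition mu_u_hat : R := Num.max mhat (mhat / (1 + pihat)).

Definition Cn_eq (alpha C : R) : Prop :=
  Phi (C + Num.sqrt (n%:R) * (mu_u_hat - mu_l_hat) / sigma_hat) - Phi (- C) = alpha.

Definition CS (C : R) : set R :=
  `[mu_l_hat - C * sigma_hat / Num.sqrt (n%:R),
    mu_u_hat + C * sigma_hat / Num.sqrt (n%:R)].

Definition ttilde : R := Num.sqrt (n%:R) * mhat / sigma_u.

End DiD.

(** Since pihat >= 0 we have sigma_hat = sigma_u, and the endpoint of CS^mu
    nearest to 0 is m_hat/(1+pihat) shifted by C_n sigma_u/sqrt n.  So if 0 lies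
    in CS^mu then u := |t~|/(1+pihat) <= C_n, and the equation defining C_n
    reads Phi(C_n + u pihat) - Phi(-C_n) = alpha.  Now C_n + u pihat >= u (1+pihat)
    = |t~| > tstar, and, as pihat <= 1, -C_n <= -u <= -|t~|/2 < -tstar/2; by strict
    monotonicity of Phi the left-hand side exceeds Phi(tstar) - Phi(-tstar/2) = alpha.
    The sign condition on mu_g, tau_g only selects the identified set. *)

From HB Require Import structures.
From mathcomp Require Import all_boot all_order all_algebra.
From mathcomp Require Import all_classical all_reals all_analysis.
From mathcomp Require Import measurable_realfun ring lra.
Set Implicit Arguments. Unset Strict Implicit. Unset Printing Implicit Defensive.
Import Order.TTheory GRing.Theory Num.Theory.
Local Open Scope classical_set_scope.
Local Open Scope ring_scope.

Section standard_normal_cdf.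
Variable R : realType.
Implicit Types m s x y z : R.

Lemma normal_fun_itv_ge_min m s x y z : x <= z <= y ->
  Num.min (normal_fun m s x) (normal_fun m s y) <= normal_fun m s z.
Proof.
move=> /andP[xz zy]; rewrite ge_min /normal_fun !ler_expR !mulNr !lerN2.
have s2_ge0 : 0 <= (s ^+ 2 *+ 2)^-1 by rewrite invr_ge0 mulrn_wge0 ?sqr_ge0.
have [mz|zm] := leP m z.
- by apply/orP; right; apply: ler_wpM2r => //; nra.
- by apply/orP; left; apply: ler_wpM2r => //; nra.
Qed.

Lemma normal_prob_itv_gt0 m s x y : s != 0 -> x < y ->
  (0 < normal_prob m s `]x, y])%E.
Proof.
move=> s0 xy.
pose c := normal_peak s * Num.min (normal_fun m s x) (normal_fun m s y).
have c_gt0 : 0 < c by rewrite mulr_gt0 ?normal_peak_gt0 // lt_min !expR_gt0.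
have c_le : (\int[lebesgue_measure]_(z in `]x, y]) (cst c%:E z)
             <= normal_prob m s `]x, y])%E.
  apply: ge0_le_integral => //.
  - by move=> z _; rewrite lee_fin ltW.
  - apply/measurable_EFinP/measurable_funTS; exact: measurable_normal_pdf.
  - move=> z; rewrite /= in_itv /= => /andP[xz zy].
    rewrite lee_fin normal_pdfE // ler_pM2l ?normal_peak_gt0 //.
    by apply: normal_fun_itv_ge_min; rewrite zy ltW.
apply: lt_le_trans c_le.
rewrite integral_cst //= lebesgue_measure_itv /= lte_fin xy -EFinD -EFinM.
by rewrite lte_fin mulr_gt0 // subr_gt0.
Qed.

Lemma PhiB x y : x <= y -> Phi y - Phi x = fine (normal_prob 0 1 `]x, y]).
Proof.
move=> xy; rewrite /Phi.
have -> : [set` `]-oo, y]] = [set` `]-oo, x]] `|` [set` `]x, y]] :> set R.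
  by rewrite (@itv_bndbnd_setU _ _ _ (BRight x)) //= bnd_simp.
rewrite measureU //=; last first.
  apply/seteqP; split => z //=; rewrite !in_itv /= => -[zx /andP[xz _]].
  by move: (le_lt_trans zx xz); rewrite ltxx.
by rewrite fineD ?fin_num_measure // addrC addKr.
Qed.

Lemma ler_Phi : {mono (@Phi R) : x y / x <= y}.
Proof.
apply: le_mono => x y xy.
rewrite -subr_gt0 PhiB ?ltW // -lte_fin fineK ?fin_num_measure //.
exact: normal_prob_itv_gt0 (oner_neq0 R) xy.
Qed.

Lemma ltr_Phi : {mono (@Phi R) : x y / x < y}.
Proof. exact: leW_mono ler_Phi. Qed.

End standard_normal_cdf.

Lemma itv_min_max_div_norm_le (R : realFieldType) (a q k : R) : 1 <= q ->
  Num.min a (a / q) - k <= 0 <= Num.max a (a / q) + k -> `|a| / q <= k.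
Proof.
move=> q_ge1 /andP[lo hi].
have q_gt0 : 0 < q by lra.
have [a_ge0|a_lt0] := leP 0 a.
- have aq_le : a / q <= a by rewrite ler_pdivrMr //; nra.
  by rewrite ger0_norm //; move: lo; rewrite (min_idPr aq_le); lra.
- have aq_ge : a <= a / q by rewrite ler_pdivlMr //; nra.
  by rewrite ltr0_norm // mulNr; move: hi; rewrite (max_idPr aq_ge); lra.
Qed.

Section DiD_bounds.
Variables (R : realType) (n : nat).
Variables (D : 'I_n -> bool) (Y0 Y1 : 'I_n -> R) (g : R -> R) (pihat sigma_u : R).
Hypotheses (pihat_ge0 : 0 <= pihat) (sigma_u_gt0 : 0 < sigma_u).

Local Notation m := (mhat D Y0 Y1 g).
Local Notation t := (ttilde D Y0 Y1 g sigma_u).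
Local Notation r := (Num.sqrt (n%:R : R)).

Let q_ge1 : 1 <= 1 + pihat. Proof. by rewrite lerDl. Qed.
Let q_gt0 : 0 < 1 + pihat. Proof. by rewrite ltr_wpDr. Qed.

Lemma sigma_hatE : sigma_hat pihat sigma_u = sigma_u.
Proof.
apply/max_idPr; rewrite /sigma_l ler_pdivrMr //.
by rewrite ler_peMr // ltW.
Qed.

Lemma mu_u_hatBmu_l_hat :
  mu_u_hat D Y0 Y1 g pihat - mu_l_hat D Y0 Y1 g pihat = `|m| / (1 + pihat) * pihat.
Proof.
rewrite /mu_u_hat /mu_l_hat.
have [m_ge0|m_lt0] := leP 0 m.
- have mq_le : m / (1 + pihat) <= m by rewrite ler_pdivrMr // ler_peMr.
  by rewrite (max_idPl mq_le) (min_idPr mq_le) ger0_norm //; field; rewrite gt_eqF.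
- have mq_ge : m <= m / (1 + pihat) by rewrite ler_pdivlMr // ger_nMr.
  by rewrite (max_idPr mq_ge) (min_idPl mq_ge) ltr0_norm //; field; rewrite gt_eqF.
Qed.

Lemma Cn_shiftE :
  r * (mu_u_hat D Y0 Y1 g pihat - mu_l_hat D Y0 Y1 g pihat) / sigma_hat pihat sigma_u
  = `|t| / (1 + pihat) * pihat.
Proof.
rewrite sigma_hatE mu_u_hatBmu_l_hat /ttilde !normrM normfV.
rewrite (ger0_norm (sqrtr_ge0 _)) (gtr0_norm sigma_u_gt0).
by field; rewrite !gt_eqF.
Qed.

Lemma CS0_ttilde_le (C : R) : (0 < n)%N ->
  CS D Y0 Y1 g pihat sigma_u C 0 -> `|t| / (1 + pihat) <= C.
Proof.
move=> n_gt0; rewrite /CS sigma_hatE /= in_itv /= => CS0.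
have r_gt0 : 0 < r by rewrite sqrtr_gt0 ltr0n.
have m_le := itv_min_max_div_norm_le q_ge1 CS0.
have -> : `|t| / (1 + pihat) = `|m| / (1 + pihat) * (r / sigma_u).
  rewrite /ttilde !normrM normfV (gtr0_norm r_gt0) (gtr0_norm sigma_u_gt0).
  by field; rewrite !gt_eqF.
by rewrite -ler_pdivlMr ?divr_gt0 // invf_div mulrA.
Qed.

End DiD_bounds.

Theorem corollary1 (R : realType) (n : nat)
  (D : 'I_n -> bool) (Y0 Y1 : 'I_n -> R) (g : R -> R)
  (mu_g tau_g : R) (alpha tstar pihat sigma_u C : R) :
  mu_g * tau_g < 0 ->
  (0 < n1 D)%N -> (0 < n0 D)%N ->
  0 < alpha < 1 ->
  0 <= pihat <= 1 ->
  0 < sigma_u ->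
  Phi tstar - Phi (- tstar / 2) = alpha ->
  Cn_eq D Y0 Y1 g pihat sigma_u alpha C ->
  tstar < `|ttilde D Y0 Y1 g sigma_u| ->
  ~ (CS D Y0 Y1 g pihat sigma_u C 0).
Proof.
move=> _ _ n0_gt0 _ /andP[pihat_ge0 pihat_le1] sigma_u_gt0 tstarE.
rewrite /Cn_eq Cn_shiftE // -tstarE => PhiE tstar_lt CS0.
have n_gt0 : (0 < n)%N by apply: leq_trans n0_gt0 (leq_subr _ _).
have u_le := CS0_ttilde_le pihat_ge0 sigma_u_gt0 n_gt0 CS0.
set u := `|_| / (1 + pihat) in u_le PhiE.
have tE : `|ttilde D Y0 Y1 g sigma_u| = u + u * pihat.
  by rewrite /u; field; rewrite gt_eqF // ltr_wpDr.
have u_ge0 : 0 <= u by rewrite divr_ge0 // addr_ge0.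
have Phi_lt : Phi tstar < Phi (C + u * pihat) by rewrite ltr_Phi; lra.
have Phi_le : Phi (- C) <= Phi (- tstar / 2) by rewrite ler_Phi; nra.
by move: PhiE; lra.
Qed.
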